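(* Assume source and target traces are related via ${\sim}=\langle \overset{\circ}{\sim},\overset{\bullet}{\sim}\rangle$, i.e. $s\sim t\iff s^\circ\overset{\circ}{\sim}t^\circ \wedge s^\bullet\overset{\bullet}{\sim}t^\bullet$, where $\overset{\circ}{\sim}$ is a total and surjective map from target to source input projections and $\overset{\bullet}{\sim}$ is an arbitrary relation between source and target output projections. Assume the compilation chain satisfies $\mathit{CC}^{\sim}$, and let $\phi_S\in\mathit{uco}(2^{\mathit{Trace}_S^\circ})$ and $\rho_S\in\mathit{uco}(2^{\mathit{Trace}_S^\bullet})$. Let $\phi_T^\#=g^\circ\circ\phi_S\circ f^\circ$ with $f^\circ(\pi_T^\circ)=\{s^\circ\mid\exists t^\circ\in\pi_T^\circ.\ s^\circ\overset{\circ}{\sim}t^\circ\}$ and $g^\circ(\pi_S^\circ)=\{t^\circ\mid\forall s^\circ.\ s^\circ\overset{\circ}{\sim}t^\circ\Rightarrow s^\circ\in\pi_S^\circ\}$, and let $\rho_T^\#$ be any map on sets of target output projections such that for all $s$ and $t$, $s^\bullet\overset{\bullet}{\sim}t^\bullet$ implies $\rho_T^\#(t^\bullet)=\rho_T^\#(\tilde\tau^\bullet(\rho_S(s^\bullet)))$. If a source program $W$ satisfies $\mathit{ANI}[\phi_S,\rho_S]$, then $W{\downarrow}$ satisfies $\mathit{ANI}[\phi_T^\#,\rho_T^\#]$.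
   Context: A compilation chain consists of source (whole) programs $W$, target programs, sets $\mathit{Trace}_S,\mathit{Trace}_T$ of source and target traces, semantics relations $W\rightsquigarrow t$ at both levels, and a compiler $W\mapsto W{\downarrow}$; $\mathit{beh}(W)=\{t\mid W\rightsquigarrow t\}$, and $W$ satisfies a hyperproperty $H$ iff $\mathit{beh}(W)\in H$. $\mathit{CC}^{\sim}$ states: for every $W$ and $t$, if $W{\downarrow}\rightsquigarrow t$ then there is $s\sim t$ with $W\rightsquigarrow s$. Each trace $t$ has a disjoint input projection $t^\circ$ and output projection $t^\bullet$; $\mathit{Trace}^\circ,\mathit{Trace}^\bullet$ denote the sets of input and output projections. ''Total and surjective map from target to source'' means every target input projection is related to exactly one source input projection and every source input projection is related to some target one. $\tilde\tau^\bullet(\pi)=\{t^\bullet\mid\exists s^\bullet\in\pi.\ s^\bullet\overset{\bullet}{\sim}t^\bullet\}$ is the existential image of $\overset{\bullet}{\sim}$. An upper closure operator ($\mathit{uco}$) on a powerset is a monotone, idempotent, extensive map. $\mathit{ANI}[\phi,\rho]=\{\pi\mid\forall t_1,t_2\in\pi.\ \phi(t_1^\circ)=\phi(t_2^\circ)\Rightarrow\rho(t_1^\bullet)=\rho(t_2^\bullet)\}$, where $\phi(x)$ abbreviates $\phi(\{x\})$ and similarly for $\rho$. *)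

(* sets are predicates [X -> Prop], set equality is Leibniz
   equality of predicates (extensional thanks to funext/propext). *)
Set Implicit Arguments.

Definition set (X : Type) := X -> Prop.

Definition subset {X : Type} (A B : set X) : Prop := forall x, A x -> B x.

Definition singleton {X : Type} (x : X) : set X := fun y => y = x.

Definition uco {X : Type} (f : set X -> set X) : Prop :=
  (forall A B, subset A B -> subset (f A) (f B)) /\
  (forall A, f (f A) = f A) /\
  (forall A, subset A (f A)).

Definition beh {Prog Trace : Type} (sem : Prog -> Trace -> Prop) (W : Prog)
  : set Trace := fun t => sem W t.

Definition hsat {Prog Trace : Type} (sem : Prog -> Trace -> Prop) (W : Prog)
  (H : set Trace -> Prop) : Prop := H (beh sem W).

Definition CC {ProgS ProgT TraceS TraceT : Type}
  (semS : ProgS -> TraceS -> Prop) (semT : ProgT -> TraceT -> Prop)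
  (comp : ProgS -> ProgT) (sim : TraceS -> TraceT -> Prop) : Prop :=
  forall W t, semT (comp W) t -> exists s, sim s t /\ semS W s.

Definition pair_rel {TraceS TraceT InS InT OutS OutT : Type}
  (inS : TraceS -> InS) (outS : TraceS -> OutS)
  (inT : TraceT -> InT) (outT : TraceT -> OutT)
  (relI : InS -> InT -> Prop) (relO : OutS -> OutT -> Prop)
  : TraceS -> TraceT -> Prop :=
  fun s t => relI (inS s) (inT t) /\ relO (outS s) (outT t).

Definition total_surjective_map {InS InT : Type} (relI : InS -> InT -> Prop)
  : Prop :=
  (forall t, exists s, relI s t /\ forall s', relI s' t -> s' = s) /\
  (forall s, exists t, relI s t).

Definition ANI {Trace I O : Type} (inp : Trace -> I) (out : Trace -> O)
  (phi : set I -> set I) (rho : set O -> set O) : set Trace -> Prop :=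
  fun pi => forall t1 t2, pi t1 -> pi t2 ->
    phi (singleton (inp t1)) = phi (singleton (inp t2)) ->
    rho (singleton (out t1)) = rho (singleton (out t2)).

Definition f_in {InS InT : Type} (relI : InS -> InT -> Prop) (A : set InT)
  : set InS := fun s => exists t, A t /\ relI s t.

Definition g_in {InS InT : Type} (relI : InS -> InT -> Prop) (A : set InS)
  : set InT := fun t => forall s, relI s t -> A s.

Definition tau_out {OutS OutT : Type} (relO : OutS -> OutT -> Prop)
  (A : set OutS) : set OutT := fun t => exists s, A s /\ relO s t.

From Stdlib Require Import FunctionalExtensionality PropExtensionality.

(* Because the input relation is a total surjective function from target to
   source inputs, [f_in] sends the singleton of a target input to the
   singleton of its source image, and [g_in] is injective.  Hence two target
   traces of [W↓] with equal [phi_T#]-abstractions of their inputs come, by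
   CC, from two source traces of [W] with equal [phi_S]-abstractions; source
   ANI equates their [rho_S]-abstractions, and the hypothesis on [rho_T#]
   transports this equality to the target outputs. *)

Lemma set_ext {X : Type} (A B : set X) : (forall x, A x <-> B x) -> A = B.
Proof.
  intros AB; apply functional_extensionality; intros x.
  apply propositional_extensionality, AB.
Qed.

Section FunctionalInputRelation.

Context {InS InT : Type} {relI : InS -> InT -> Prop}.
Hypothesis relI_functional :
  forall {s s' t}, relI s t -> relI s' t -> s = s'.

Lemma f_in_singleton {s t} :
  relI s t -> f_in relI (singleton t) = singleton s.
Proof.
  intros Hst; apply set_ext; intros x; unfold f_in, singleton; split.
  - intros [t' [-> Hxt]]; exact (relI_functional Hxt Hst).
  - intros ->; exists t; split; [reflexivity | exact Hst].
Qed.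

Lemma g_in_at (A : set InS) {s t} : relI s t -> (g_in relI A t <-> A s).
Proof.
  intros Hst; unfold g_in; split.
  - intros HA; exact (HA s Hst).
  - intros As s' Hs't; rewrite (relI_functional Hs't Hst); exact As.
Qed.

Hypothesis relI_surjective : forall s, exists t, relI s t.

Lemma g_in_inj (A B : set InS) : g_in relI A = g_in relI B -> A = B.
Proof.
  intros AB; apply set_ext; intros s.
  destruct (relI_surjective s) as [t Hst].
  rewrite <- (g_in_at A Hst), <- (g_in_at B Hst), AB; reflexivity.
Qed.

End FunctionalInputRelation.

Lemma total_surjective_map_functional {InS InT : Type}
    {relI : InS -> InT -> Prop} :
  total_surjective_map relI -> forall s s' t, relI s t -> relI s' t -> s = s'.
Proof.
  intros [Htot _] s s' t Hst Hs't.
  destruct (Htot t) as [u [_ Hu]].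
  rewrite (Hu s Hst), (Hu s' Hs't); reflexivity.
Qed.

Theorem theorem4p2
  (ProgS ProgT TraceS TraceT InS InT OutS OutT : Type)
  (semS : ProgS -> TraceS -> Prop) (semT : ProgT -> TraceT -> Prop)
  (comp : ProgS -> ProgT)
  (inS : TraceS -> InS) (outS : TraceS -> OutS)
  (inT : TraceT -> InT) (outT : TraceT -> OutT)
  (relI : InS -> InT -> Prop) (relO : OutS -> OutT -> Prop)
  (HrelI : total_surjective_map relI)
  (HCC : CC semS semT comp (pair_rel inS outS inT outT relI relO))
  (phiS : set InS -> set InS) (rhoS : set OutS -> set OutS)
  (HphiS : uco phiS) (HrhoS : uco rhoS)
  (rhoT : set OutT -> set OutT)
  (HrhoT : forall (s : TraceS) (t : TraceT), relO (outS s) (outT t) ->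
     rhoT (singleton (outT t)) =
     rhoT (tau_out relO (rhoS (singleton (outS s)))))
  (W : ProgS) :
  hsat semS W (ANI inS outS phiS rhoS) ->
  hsat semT (comp W)
    (ANI inT outT (fun A => g_in relI (phiS (f_in relI A))) rhoT).
Proof.
  intros HW t1 t2 Ht1 Ht2 Hphi.
  pose proof (total_surjective_map_functional HrelI) as Hfun.
  destruct (HCC W t1 Ht1) as [s1 [[Hi1 Ho1] Hs1]].
  destruct (HCC W t2 Ht2) as [s2 [[Hi2 Ho2] Hs2]].
  rewrite (f_in_singleton Hfun Hi1), (f_in_singleton Hfun Hi2) in Hphi.
  apply (g_in_inj Hfun (proj2 HrelI)) in Hphi.
  rewrite (HrhoT _ _ Ho1), (HrhoT _ _ Ho2), (HW s1 s2 Hs1 Hs2 Hphi).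
  reflexivity.
Qed.
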